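(* Let $(\mathcal{Z},\nu)$ be a measurable space with a $\sigma$-finite measure $\nu$, let $P$ be a probability measure on $\mathcal{Z}$ with $P\ll\nu$ and density $\rho=dP/d\nu$ satisfying $\rho>0$ $\nu$-almost everywhere. Let $\omega:\mathcal{Z}\times\mathcal{Z}\to[0,\infty)$ be measurable and symmetric, $\omega(z,\tilde z)=\omega(\tilde z,z)$, and assume $$C_\rho:=\iint\frac{(\rho(z)-\rho(\tilde z))^2}{\rho(z)+\rho(\tilde z)}\,\omega(z,\tilde z)\,\nu(dz)\nu(d\tilde z)<\infty,\qquad \iint\rho(z)\,\omega(z,\tilde z)\,\nu(dz)\nu(d\tilde z)<\infty.$$ For a measurable $f_\theta:\mathcal{Z}\to\mathbb{R}$ define $T_\theta(z,\tilde z)=\tanh\big((f_\theta(z)-f_\theta(\tilde z))/2\big)$, $$\mathcal{J}_\omega(\theta)=\iint\left[T_\theta(z,\tilde z)-\frac{\rho(z)-\rho(\tilde z)}{\rho(z)+\rho(\tilde z)}\right]^2(\rho(z)+\rho(\tilde z))\,\omega(z,\tilde z)\,\nu(dz)\nu(d\tilde z),$$ $$\mathcal{L}_\omega(\theta)=\iint\big[T_\theta(z,\tilde z)-1\big]^2\,\omega(z,\tilde z)\,\rho(z)\,\nu(dz)\nu(d\tilde z).$$ Then $\mathcal{J}_\omega(\theta)=2\mathcal{L}_\omega(\theta)+C_\rho'$, where $C_\rho'=C_\rho-2\iint\rho(z)\omega(z,\tilde z)\,\nu(dz)\nu(d\tilde z)$ does not depend on $f_\theta$. In particular, minimizing $\mathcal{J}_\omega$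 over $f_\theta$ is equivalent to minimizing $\mathcal{L}_\omega$.
   Context: $f_\theta$ is a scalar ''energy'' function parameterized by $\theta$; all statements concern the dependence on the function $f_\theta$. *)

From HB Require Import structures.
From mathcomp Require Import all_boot all_order all_algebra.
From mathcomp Require Import all_classical all_reals all_analysis.
Set Implicit Arguments. Unset Strict Implicit. Unset Printing Implicit Defensive.
Import Order.TTheory GRing.Theory Num.Theory.
Local Open Scope ring_scope.

Definition tanh {R : realType} (x : R) : R :=
  (expR x - expR (- x)) / (expR x + expR (- x)).

Definition Tth {R : realType} {T : Type} (f : T -> R) (z zt : T) : R :=
  tanh ((f z - f zt) / 2).

Local Open Scope ereal_scope.

Definition iint {d} {T : measurableType d} {R : realType}
  (nu : {measure set T -> \bar R}) (F : T -> T -> R) : \bar R :=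
  \int[nu]_z \int[nu]_zt (F z zt)%:E.

Definition C_rho {d} {T : measurableType d} {R : realType}
  (nu : {measure set T -> \bar R}) (rho : T -> R) (omega : T -> T -> R) : \bar R :=
  iint nu (fun z zt => ((rho z - rho zt) ^+ 2 / (rho z + rho zt) * omega z zt)%R).

Definition I_rho {d} {T : measurableType d} {R : realType}
  (nu : {measure set T -> \bar R}) (rho : T -> R) (omega : T -> T -> R) : \bar R :=
  iint nu (fun z zt => (rho z * omega z zt)%R).

Definition J_omega {d} {T : measurableType d} {R : realType}
  (nu : {measure set T -> \bar R}) (rho : T -> R) (omega : T -> T -> R)
  (f : T -> R) : \bar R :=
  iint nu (fun z zt =>
    ((Tth f z zt - (rho z - rho zt) / (rho z + rho zt)) ^+ 2
       * (rho z + rho zt) * omega z zt)%R).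

Definition L_omega {d} {T : measurableType d} {R : realType}
  (nu : {measure set T -> \bar R}) (rho : T -> R) (omega : T -> T -> R)
  (f : T -> R) : \bar R :=
  iint nu (fun z zt => ((Tth f z zt - 1) ^+ 2 * omega z zt * rho z)%R).

From HB Require Import structures.
From mathcomp Require Import all_boot all_order all_algebra.
From mathcomp Require Import all_classical all_reals all_analysis.
From mathcomp Require Import measurable_realfun.
From mathcomp Require Import ring lra.
Set Implicit Arguments.
Unset Strict Implicit.
Unset Printing Implicit Defensive.
Import Order.TTheory GRing.Theory Num.Theory.
Local Open Scope classical_set_scope.
Local Open Scope ring_scope.

(* Expanding the square in J and using T(zt, z) = - T(z, zt) together with the
   symmetry of omega, the integrand of J plus rho(z) omega + rho(zt) omega equals,
   pointwise, the integrand of C_rho plus the integrand of L at (z, zt) and at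
   (zt, z).  Integrating with Tonelli, the swapped terms have the same integral
   as the unswapped ones, so J + 2 I = C_rho + 2 L, which can be solved for J
   because I is finite. *)

Lemma measurable_invr (R : realType) : measurable_fun setT (@GRing.inv R).
Proof.
rewrite -(setUv [set (0 : R)]); apply/measurable_funU => //.
  exact: measurableC.
split; first exact: measurable_fun_set1.
apply: open_continuous_measurable_fun.
  by rewrite openC; apply/accessible_closed_set1/hausdorff_accessible/Rhausdorff.
by move=> x; rewrite inE /= => /eqP x0; exact: inv_continuous.
Qed.

Lemma measurable_tanh (R : realType) : measurable_fun setT (@tanh R).
Proof.
have mexpN : measurable_fun setT (fun x : R => expR (- x)).
  exact: measurableT_comp (@measurable_expR R) _.
rewrite /tanh; apply: measurable_funM.
  by apply: measurable_funB => //; exact: measurable_expR.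
apply: measurableT_comp; first exact: measurable_invr.
by apply: measurable_funD => //; exact: measurable_expR.
Qed.

Lemma tanhN (R : realType) (x : R) : tanh (- x) = - tanh x.
Proof.
by rewrite /tanh opprK -(opprB (expR x)) (addrC (expR (- x))) mulNr.
Qed.

Lemma TthC (R : realType) (T : Type) (f : T -> R) z zt :
  Tth f zt z = - Tth f z zt.
Proof. by rewrite /Tth -tanhN -mulNr opprB. Qed.

Definition nonneg_measurable2 d (T : measurableType d) (R : realType)
    (F : T -> T -> R) :=
  measurable_fun setT (fun p : T * T => F p.1 p.2) /\ forall z zt, 0 <= F z zt.

Lemma nonneg_measurable2D d (T : measurableType d) (R : realType)
    (F G : T -> T -> R) :
  nonneg_measurable2 F -> nonneg_measurable2 G ->
  nonneg_measurable2 (fun z zt => F z zt + G z zt).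
Proof.
by move=> [mF F0] [mG G0]; split=> [|z zt]; [exact: measurable_funD | exact: addr_ge0].
Qed.

Lemma nonneg_measurable2C d (T : measurableType d) (R : realType)
    (F : T -> T -> R) :
  nonneg_measurable2 F -> nonneg_measurable2 (fun z zt => F zt z).
Proof.
by move=> [mF F0]; split=> //; exact: (measurableT_comp mF (@measurable_swap _ _ T T)).
Qed.

Section iterated_integral.
Context d (T : measurableType d) (R : realType) (nu : {measure set T -> \bar R}).
Hypothesis nu_sigma_finite : sigma_finite setT nu.

Let snu : set T -> \bar R := nu.
HB.instance Definition _ := Measure.copy snu nu.
HB.instance Definition _ := Measure_isSigmaFinite.Build d T R snu nu_sigma_finite.

Local Open Scope ereal_scope.

Lemma iint_ge0 (F : T -> T -> R) : (forall z zt, 0 <= F z zt)%R -> 0 <= iint nu F.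
Proof.
by move=> F0; apply: integral_ge0 => z _; apply: integral_ge0 => zt _; rewrite lee_fin.
Qed.

Lemma measurable_fun_iint_inner (F : T -> T -> R) :
  nonneg_measurable2 F -> measurable_fun setT (fun z => \int[nu]_zt (F z zt)%:E).
Proof.
move=> [mF F0].
apply: (@measurable_fun_fubini_tonelli_F _ _ _ _ _ snu (fun p => (F p.1 p.2)%:E)).
  exact/measurable_EFinP.
by move=> p; rewrite lee_fin.
Qed.

Lemma iint_swap (F : T -> T -> R) :
  nonneg_measurable2 F -> iint nu (fun z zt => F zt z) = iint nu F.
Proof.
move=> [mF F0].
rewrite /iint (@fubini_tonelli _ _ _ _ _ snu snu (fun p => (F p.1 p.2)%:E)) //.
- exact/measurable_EFinP.
- by move=> p; rewrite lee_fin.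
Qed.

Lemma iintD (F G : T -> T -> R) : nonneg_measurable2 F -> nonneg_measurable2 G ->
  iint nu (fun z zt => F z zt + G z zt)%R = iint nu F + iint nu G.
Proof.
move=> Fnm Gnm; have [mF F0] := Fnm; have [mG G0] := Gnm.
have measurable_section (H : T -> T -> R) z :
    measurable_fun setT (fun p : T * T => H p.1 p.2) ->
    measurable_fun setT (fun zt => (H z zt)%:E).
  move=> mH; apply/measurable_EFinP.
  exact: measurableT_comp mH (measurable_pair1 z).
rewrite /iint; under eq_integral => z _.
  under eq_integral do rewrite EFinD.
  rewrite ge0_integralD //; first over.
  - by move=> zt _; rewrite lee_fin.
  - exact: measurable_section.
  - by move=> zt _; rewrite lee_fin.
  - exact: measurable_section.
rewrite ge0_integralD //.
- by move=> z _; apply: integral_ge0 => zt _; rewrite lee_fin.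
- exact: measurable_fun_iint_inner.
- by move=> z _; apply: integral_ge0 => zt _; rewrite lee_fin.
- exact: measurable_fun_iint_inner.
Qed.

Lemma iint_add_swap (F G : T -> T -> R) :
  nonneg_measurable2 F -> nonneg_measurable2 G ->
  iint nu (fun z zt => F z zt + G z zt + G zt z)%R = iint nu F + iint nu G + iint nu G.
Proof.
move=> Fnm Gnm; have GCnm := nonneg_measurable2C Gnm.
rewrite (@iintD (fun z zt => F z zt + G z zt)%R (fun z zt => G zt z)) //.
  by rewrite iintD // (iint_swap Gnm).
exact: nonneg_measurable2D.
Qed.

End iterated_integral.

Lemma weighted_sqr_dev_identity (R : realType) (a b w t : R) :
  0 <= a -> 0 <= b ->
  (t - (a - b) / (a + b)) ^+ 2 * (a + b) * w + a * w + b * w =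
  (a - b) ^+ 2 / (a + b) * w + (t - 1) ^+ 2 * w * a + (- t - 1) ^+ 2 * w * b.
Proof.
move=> a0 b0; have [ab0|ab0] := eqVneq (a + b) 0; last by field.
(* a + b = 0 forces a = b = 0, where both sides vanish
   despite the junk value 0 / 0 = 0. *)
have -> : a = 0 by lra.
have -> : b = 0 by lra.
by ring.
Qed.

Lemma adde_double_transpose (R : realType) (J L C I : \bar R) : I \is a fin_num ->
  (J + I + I = C + L + L -> J = 2%:E * L + (C - 2%:E * I))%E.
Proof.
move=> Ifin JC; have IIfin : (I + I)%E \is a fin_num by rewrite fin_numD Ifin.
have double (x : \bar R) : (2%:E * x = x + x)%E by rewrite -mule2n -mule_natl.
rewrite -[J](addeK _ IIfin) addeA JC !double.
by rewrite addeA [L + L + C]addeC addeA.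
Qed.

Section energy_integrands.
Variables (d : measure_display) (T : measurableType d) (R : realType).
Variables (rho : T -> R) (omega : T -> T -> R) (f : T -> R).

Definition J_integrand z zt :=
  (Tth f z zt - (rho z - rho zt) / (rho z + rho zt)) ^+ 2 * (rho z + rho zt) * omega z zt.
Definition L_integrand z zt := (Tth f z zt - 1) ^+ 2 * omega z zt * rho z.
Definition C_integrand z zt := (rho z - rho zt) ^+ 2 / (rho z + rho zt) * omega z zt.
Definition I_integrand z zt := rho z * omega z zt.

Hypotheses (rho_ge0 : forall z, 0 <= rho z) (omega_ge0 : forall z zt, 0 <= omega z zt).

Lemma J_integrand_add_I : (forall z zt, omega z zt = omega zt z) -> forall z zt,
  J_integrand z zt + I_integrand z zt + I_integrand zt z =
  C_integrand z zt + L_integrand z zt + L_integrand zt z.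
Proof.
move=> omega_sym z zt.
rewrite /J_integrand /I_integrand /C_integrand /L_integrand.
rewrite (TthC f z zt) (omega_sym zt z).
exact: weighted_sqr_dev_identity.
Qed.

Hypotheses (mrho : measurable_fun setT rho)
  (momega : measurable_fun setT (fun p : T * T => omega p.1 p.2))
  (mf : measurable_fun setT f).

Let mrho1 : measurable_fun setT (fun p : T * T => rho p.1).
Proof. exact: measurableT_comp mrho measurable_fst. Qed.

Let mrho2 : measurable_fun setT (fun p : T * T => rho p.2).
Proof. exact: measurableT_comp mrho measurable_snd. Qed.

Let mrho_sum_inv : measurable_fun setT (fun p : T * T => (rho p.1 + rho p.2)^-1).
Proof. by apply: measurableT_comp; [exact: measurable_invr | exact: measurable_funD]. Qed.

Let mTth : measurable_fun setT (fun p : T * T => Tth f p.1 p.2).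
Proof.
apply: measurableT_comp; first exact: measurable_tanh.
apply: measurable_funM => //; apply: measurable_funB.
- exact: measurableT_comp mf measurable_fst.
- exact: measurableT_comp mf measurable_snd.
Qed.

Let rho_sum_ge0 z zt : 0 <= rho z + rho zt.
Proof. exact: addr_ge0. Qed.

Lemma nonneg_measurable2_J : nonneg_measurable2 J_integrand.
Proof.
split=> [|z zt]; rewrite /J_integrand; last first.
  by rewrite mulr_ge0 ?omega_ge0 // mulr_ge0 ?sqr_ge0.
apply: measurable_funM => //; apply: measurable_funM; last exact: measurable_funD.
apply/measurable_funX/measurable_funB => //.
by apply: measurable_funM => //; exact: measurable_funB.
Qed.

Lemma nonneg_measurable2_L : nonneg_measurable2 L_integrand.
Proof.
split=> [|z zt]; rewrite /L_integrand; last first.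
  by rewrite mulr_ge0 ?rho_ge0 // mulr_ge0 ?omega_ge0 ?sqr_ge0.
apply: measurable_funM => //; apply: measurable_funM => //.
exact/measurable_funX/measurable_funB.
Qed.

Lemma nonneg_measurable2_C : nonneg_measurable2 C_integrand.
Proof.
split=> [|z zt]; rewrite /C_integrand; last first.
  by rewrite mulr_ge0 ?omega_ge0 // mulr_ge0 ?sqr_ge0 ?invr_ge0.
apply: measurable_funM => //; apply: measurable_funM => //.
exact/measurable_funX/measurable_funB.
Qed.

Lemma nonneg_measurable2_I : nonneg_measurable2 I_integrand.
Proof. by split=> [|z zt]; [exact: measurable_funM | exact: mulr_ge0]. Qed.

End energy_integrands.

Theorem theorem1 (d : measure_display) (T : measurableType d) (R : realType)
  (nu : {measure set T -> \bar R}) (P : probability T R)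
  (rho : T -> R) (omega : T -> T -> R) :
  sigma_finite setT nu ->
  measurable_fun setT rho ->
  (forall z, 0 <= rho z) ->
  (forall A, measurable A -> P A = (\int[nu]_(z in A) (rho z)%:E)%E) ->
  {ae nu, forall z, 0 < rho z} ->
  measurable_fun setT (fun p : T * T => omega p.1 p.2) ->
  (forall z zt, 0 <= omega z zt) ->
  (forall z zt, omega z zt = omega zt z) ->
  (C_rho nu rho omega < +oo)%E ->
  (I_rho nu rho omega < +oo)%E ->
  forall f : T -> R, measurable_fun setT f ->
    J_omega nu rho omega f
    = (2%:E * L_omega nu rho omega f + (C_rho nu rho omega - 2%:E * I_rho nu rho omega))%E.
Proof.
move=> nu_sf mrho rho_ge0 _ _ momega omega_ge0 omega_sym _ I_fin f mf.
have nmJ := nonneg_measurable2_J rho_ge0 omega_ge0 mrho momega mf.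
have nmL := nonneg_measurable2_L rho_ge0 omega_ge0 mrho momega mf.
have nmC := nonneg_measurable2_C rho_ge0 omega_ge0 mrho momega.
have nmI := nonneg_measurable2_I rho_ge0 omega_ge0 mrho momega.
apply: adde_double_transpose.
  by rewrite ge0_fin_numE // iint_ge0 // => z zt; exact: mulr_ge0.
rewrite -(iint_add_swap nu_sf nmJ nmI) -(iint_add_swap nu_sf nmC nmL).
by congr iint; apply/funext => z; apply/funext => zt; exact: J_integrand_add_I.
Qed.
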